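(* Let $\epsilon_1,\epsilon_2,\epsilon_3,\epsilon_4\in\{\pm1\}$, let $\Lambda(x)$ and ${}^v\Lambda(x,y^4)$ be smooth functions of $x=(x^1,x^2)$, resp. $(x,y^4)$, and let $\widetilde\Lambda_0\neq0$ be a constant. Let $\tilde\Phi(x,y^4)>0$ be smooth with $\partial_4\tilde\Phi\neq0$, and let $\Xi(x,y^4)$ satisfy $\partial_4\Xi={}^v\Lambda\,\partial_4(\tilde\Phi^2)$ with $\Xi\neq0$ and $\partial_4\Xi\neq0$ everywhere. Let $\psi(x)$ be any solution of $\epsilon_1\partial^2_{11}\psi+\epsilon_2\partial^2_{22}\psi=2\Lambda(x)$, and let ${}_1n_k(x)$, ${}_2\tilde n_k(x)$ ($k=1,2$) be arbitrary smooth functions. Define $$h_3=\frac{\tilde\Phi^2}{4\widetilde\Lambda_0},\quad h_4=\frac{(\partial_4\tilde\Phi)^2}{\Xi},\quad n_k={}_1n_k+{}_2\tilde n_k\int\frac{(\partial_4\tilde\Phi)^2}{\tilde\Phi^3\,\Xi}\,dy^4,\quad w_i=\frac{\partial_i\Xi}{\partial_4\Xi}.$$ Then $(\psi,h_3,h_4,n_k,w_i)$ solves the system $$\epsilon_1\partial^2_{11}\psi+\epsilon_2\partial^2_{22}\psi=2\Lambda,\quad (\partial_4\phi)(\partial_4h_3)=2h_3h_4\,{}^v\Lambda,\quad \partial^2_{44}n_i+\gamma\,\partial_4n_i=0,\quad \beta w_i-\alpha_i=0,$$ where $\phi=\ln|\partial_4h_3/\sqrt{|h_3h_4|}|$, $\gamma=\partial_4\ln(|h_3|^{3/2}/|h_4|)$,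 $\alpha_i=(\partial_i\phi)(\partial_4h_3)/(2h_3)$, $\beta=(\partial_4\phi)(\partial_4h_3)/(2h_3)$. Consequently the metric $$ds^2=\epsilon_ie^{\psi}(dx^i)^2+\frac{\tilde\Phi^2}{4\widetilde\Lambda_0}\Big[dy^3+n_k dx^k\Big]^2+\frac{(\partial_4\tilde\Phi)^2}{\Xi}\Big[dy^4+\frac{\partial_i\Xi}{\partial_4\Xi}dx^i\Big]^2$$ is a generic off-diagonal solution, with Killing symmetry $\partial/\partial y^3$, of the decoupled 4-d nonholonomic Einstein equations for the canonical d-connection with sources $\Lambda$, ${}^v\Lambda$.
   Context: Coordinates $(x^1,x^2,y^3,y^4)$, $\partial_i=\partial/\partial x^i$, $\partial_4=\partial/\partial y^4$; summation over $i,k=1,2$. $\int\cdot\,dy^4$ denotes any antiderivative with respect to $y^4$ (with $x$ fixed). The ''decoupled 4-d nonholonomic Einstein equations'' are exactly the displayed system of four equations for the metric $ds^2=\epsilon_ie^\psi(dx^i)^2+h_3(dy^3+n_kdx^k)^2+h_4(dy^4+w_idx^i)^2$ with $h_a,n_k,w_i$ functions of $(x,y^4)$. *)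

From Stdlib Require Import Reals Lra ClassicalEpsilon.
Open Scope R_scope.

(* Functions of the coordinates (x^1, x^2, y^4) (no dependence on y^3). *)
Definition F3 := R -> R -> R -> R.

Definition lift2 (g : R -> R -> R) : F3 := fun a b _ => g a b.

(* Partial derivatives d_1, d_2, d_4 (value of the derivative; chosen by
   classical description, so it is the true derivative whenever it exists). *)
Definition D1 (f : F3) : F3 := fun a b c =>
  epsilon (inhabits 0) (fun l => derivable_pt_lim (fun t => f t b c) a l).
Definition D2 (f : F3) : F3 := fun a b c =>
  epsilon (inhabits 0) (fun l => derivable_pt_lim (fun t => f a t c) b l).
Definition D4 (f : F3) : F3 := fun a b c =>
  epsilon (inhabits 0) (fun l => derivable_pt_lim (fun t => f a b t) c l).

Definition ex_D1 (f : F3) a b c := exists l, derivable_pt_lim (fun t => f t b c) a l.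
Definition ex_D2 (f : F3) a b c := exists l, derivable_pt_lim (fun t => f a t c) b l.
Definition ex_D4 (f : F3) a b c := exists l, derivable_pt_lim (fun t => f a b t) c l.

Definition cont3 (f : F3) : Prop :=
  forall a b c eps, 0 < eps -> exists delta, 0 < delta /\
    forall a' b' c', Rabs (a' - a) < delta -> Rabs (b' - b) < delta ->
      Rabs (c' - c) < delta -> Rabs (f a' b' c' - f a b c) < eps.

Fixpoint Ck (k : nat) (f : F3) : Prop :=
  match k with
  | O => cont3 f
  | S k' => cont3 f /\
      (forall a b c, ex_D1 f a b c /\ ex_D2 f a b c /\ ex_D4 f a b c) /\
      Ck k' (D1 f) /\ Ck k' (D2 f) /\ Ck k' (D4 f)
  end.

Definition smooth (f : F3) : Prop := forall k, Ck k f.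

Definition phi_of (h3 h4 : F3) : F3 := fun a b c =>
  ln (Rabs (D4 h3 a b c / sqrt (Rabs (h3 a b c * h4 a b c)))).
Definition gamma_of (h3 h4 : F3) : F3 :=
  D4 (fun a b c => ln (Rpower (Rabs (h3 a b c)) (3/2) / Rabs (h4 a b c))).
Definition alpha1_of (h3 h4 : F3) : F3 := fun a b c =>
  D1 (phi_of h3 h4) a b c * D4 h3 a b c / (2 * h3 a b c).
Definition alpha2_of (h3 h4 : F3) : F3 := fun a b c =>
  D2 (phi_of h3 h4) a b c * D4 h3 a b c / (2 * h3 a b c).
Definition beta_of (h3 h4 : F3) : F3 := fun a b c =>
  D4 (phi_of h3 h4) a b c * D4 h3 a b c / (2 * h3 a b c).

(* The decoupled 4-d nonholonomic Einstein equations for the metric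
   ds^2 = eps_i e^psi (dx^i)^2 + h3 (dy^3 + n_k dx^k)^2 + h4 (dy^4 + w_i dx^i)^2,
   together with the nondegeneracy and the existence of all derivatives used. *)
Definition decoupled_einstein (eps1 eps2 : R) (Lam vLam psi h3 h4 n1 n2 w1 w2 : F3)
  : Prop :=
  forall a b c,
    h3 a b c <> 0 /\ h4 a b c <> 0 /\ D4 h3 a b c <> 0 /\
    ex_D1 psi a b c /\ ex_D1 (D1 psi) a b c /\
    ex_D2 psi a b c /\ ex_D2 (D2 psi) a b c /\
    ex_D4 h3 a b c /\
    ex_D1 (phi_of h3 h4) a b c /\ ex_D2 (phi_of h3 h4) a b c /\
    ex_D4 (phi_of h3 h4) a b c /\
    ex_D4 (fun a b c => ln (Rpower (Rabs (h3 a b c)) (3/2) / Rabs (h4 a b c))) a b c /\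
    ex_D4 n1 a b c /\ ex_D4 (D4 n1) a b c /\
    ex_D4 n2 a b c /\ ex_D4 (D4 n2) a b c /\
    eps1 * D1 (D1 psi) a b c + eps2 * D2 (D2 psi) a b c = 2 * Lam a b c /\
    D4 (phi_of h3 h4) a b c * D4 h3 a b c = 2 * h3 a b c * h4 a b c * vLam a b c /\
    D4 (D4 n1) a b c + gamma_of h3 h4 a b c * D4 n1 a b c = 0 /\
    D4 (D4 n2) a b c + gamma_of h3 h4 a b c * D4 n2 a b c = 0 /\
    beta_of h3 h4 a b c * w1 a b c - alpha1_of h3 h4 a b c = 0 /\
    beta_of h3 h4 a b c * w2 a b c - alpha2_of h3 h4 a b c = 0.

(* For h3 = Phi^2/(4 Lam0) and h4 = (d4 Phi)^2/Xi one has (d4 h3)^2/|h3 h4| = |Xi/Lam0|,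
   so phi = ln|Xi/Lam0|/2 does not involve Phi at all and d_i phi = d_i Xi/(2 Xi).  The
   second equation then reduces to the defining relation d4 Xi = vLam d4 (Phi^2), and
   beta w_i = alpha_i holds precisely for w_i = d_i Xi/d4 Xi.  The density
   (d4 Phi)^2/(Phi^3 Xi) of d4 n_k is, up to a constant factor, |h4|/|h3|^(3/2), whose
   logarithmic derivative is -gamma; this is the equation for n_k. *)

From Stdlib Require Import Reals Lra FunctionalExtensionality ClassicalEpsilon.
From Coquelicot Require Import Coquelicot.
Open Scope R_scope.

Lemma epsilon_derivable_pt_lim (g : R -> R) (x l : R) :
  is_derive g x l -> epsilon (inhabits 0) (fun l => derivable_pt_lim g x l) = l.
Proof.
  intro Hg. apply is_derive_Reals in Hg.
  apply (uniqueness_limite g x); [|exact Hg].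
  apply (epsilon_spec (inhabits 0) (fun l => derivable_pt_lim g x l)).
  now exists l.
Qed.

Lemma ex_derivable_pt_lim_ex_derive (g : R -> R) (x : R) :
  (exists l, derivable_pt_lim g x l) <-> ex_derive g x.
Proof. split; intros [l Hl]; exists l; now apply is_derive_Reals. Qed.

Lemma D1_is_derive (f : F3) a b c l : is_derive (fun t => f t b c) a l -> D1 f a b c = l.
Proof. apply epsilon_derivable_pt_lim. Qed.
Lemma D2_is_derive (f : F3) a b c l : is_derive (fun t => f a t c) b l -> D2 f a b c = l.
Proof. apply epsilon_derivable_pt_lim. Qed.
Lemma D4_is_derive (f : F3) a b c l : is_derive (fun t => f a b t) c l -> D4 f a b c = l.
Proof. apply epsilon_derivable_pt_lim. Qed.

Lemma ex_D1_is_derive (f : F3) a b c l : is_derive (fun t => f t b c) a l -> ex_D1 f a b c.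
Proof. intro H. apply ex_derivable_pt_lim_ex_derive. now exists l. Qed.
Lemma ex_D2_is_derive (f : F3) a b c l : is_derive (fun t => f a t c) b l -> ex_D2 f a b c.
Proof. intro H. apply ex_derivable_pt_lim_ex_derive. now exists l. Qed.
Lemma ex_D4_is_derive (f : F3) a b c l : is_derive (fun t => f a b t) c l -> ex_D4 f a b c.
Proof. intro H. apply ex_derivable_pt_lim_ex_derive. now exists l. Qed.

Lemma ex_D1_ex_derive (f : F3) a b c : ex_D1 f a b c -> ex_derive (fun t => f t b c) a.
Proof. apply ex_derivable_pt_lim_ex_derive. Qed.
Lemma ex_D2_ex_derive (f : F3) a b c : ex_D2 f a b c -> ex_derive (fun t => f a t c) b.
Proof. apply ex_derivable_pt_lim_ex_derive. Qed.
Lemma ex_D4_ex_derive (f : F3) a b c : ex_D4 f a b c -> ex_derive (fun t => f a b t) c.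
Proof. apply ex_derivable_pt_lim_ex_derive. Qed.

Lemma is_derive_D1 (f : F3) a b c :
  ex_D1 f a b c -> is_derive (fun t => f t b c) a (D1 f a b c).
Proof.
  intro H. apply ex_D1_ex_derive, Derive_correct in H.
  now rewrite (D1_is_derive _ _ _ _ _ H).
Qed.
Lemma is_derive_D2 (f : F3) a b c :
  ex_D2 f a b c -> is_derive (fun t => f a t c) b (D2 f a b c).
Proof.
  intro H. apply ex_D2_ex_derive, Derive_correct in H.
  now rewrite (D2_is_derive _ _ _ _ _ H).
Qed.
Lemma is_derive_D4 (f : F3) a b c :
  ex_D4 f a b c -> is_derive (fun t => f a b t) c (D4 f a b c).
Proof.
  intro H. apply ex_D4_ex_derive, Derive_correct in H.
  now rewrite (D4_is_derive _ _ _ _ _ H).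
Qed.

Lemma Derive_D4 (f : F3) a b c : ex_D4 f a b c -> Derive (fun t => f a b t) c = D4 f a b c.
Proof. intro H. now apply is_derive_unique, is_derive_D4. Qed.

Lemma smooth_ex_D (f : F3) :
  smooth f -> forall a b c, ex_D1 f a b c /\ ex_D2 f a b c /\ ex_D4 f a b c.
Proof. intro H. exact (proj1 (proj2 (H 1%nat))). Qed.
Lemma smooth_D1 (f : F3) : smooth f -> smooth (D1 f).
Proof. intros H k. exact (proj1 (proj2 (proj2 (H (S k))))). Qed.
Lemma smooth_D2 (f : F3) : smooth f -> smooth (D2 f).
Proof. intros H k. exact (proj1 (proj2 (proj2 (proj2 (H (S k)))))). Qed.
Lemma smooth_D4 (f : F3) : smooth f -> smooth (D4 f).
Proof. intros H k. exact (proj2 (proj2 (proj2 (proj2 (H (S k)))))). Qed.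

Lemma ln_Rabs_sq (y : R) : y <> 0 -> ln (Rabs y) = ln (y ^ 2) / 2.
Proof.
  intro Hy. rewrite <- pow2_abs, ln_pow by now apply Rabs_pos_lt.
  simpl INR. field.
Qed.

Lemma ln_Rabs_div_sqrt_Rabs (y z : R) :
  y <> 0 -> z <> 0 -> ln (Rabs (y / sqrt (Rabs z))) = ln (y ^ 4 / z ^ 2) / 4.
Proof.
  intros Hy Hz.
  assert (Hs : 0 < sqrt (Rabs z)) by now apply sqrt_lt_R0, Rabs_pos_lt.
  assert (Hq : y / sqrt (Rabs z) <> 0).
  { apply Rmult_integral_contrapositive_currified; [exact Hy|].
    now apply Rinv_neq_0_compat, Rgt_not_eq. }
  replace (y ^ 4 / z ^ 2) with (Rabs (y / sqrt (Rabs z)) ^ 4).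
  - rewrite ln_pow by now apply Rabs_pos_lt. simpl INR. field.
  - replace (Rabs (y / sqrt (Rabs z)) ^ 4) with ((Rabs (y / sqrt (Rabs z)) ^ 2) ^ 2)
      by ring.
    rewrite pow2_abs.
    replace ((y / sqrt (Rabs z)) ^ 2) with (y ^ 2 / sqrt (Rabs z) ^ 2) by (field; lra).
    rewrite pow2_sqrt by apply Rabs_pos.
    rewrite <- (pow2_abs z). field. now apply Rabs_no_R0.
Qed.

Lemma ln_Rpower_Rabs_div_Rabs (u v : R) :
  u <> 0 -> v <> 0 ->
  ln (Rpower (Rabs u) (3/2) / Rabs v) = 3/4 * ln (u ^ 2) - ln (v ^ 2) / 2.
Proof.
  intros Hu Hv.
  rewrite ln_div, ln_Rpower, !ln_Rabs_sq by
    (try unfold Rpower; auto using exp_pos, Rabs_pos_lt).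
  field.
Qed.

Lemma is_derive_gamma_log (h3 h4 : F3) a b c :
  (forall t, h3 a b t <> 0) -> (forall t, h4 a b t <> 0) ->
  ex_D4 h3 a b c -> ex_D4 h4 a b c ->
  is_derive (fun t => ln (Rpower (Rabs (h3 a b t)) (3/2) / Rabs (h4 a b t))) c
    (3/2 * (D4 h3 a b c / h3 a b c) - D4 h4 a b c / h4 a b c).
Proof.
  intros H3 H4 E3 E4.
  eapply is_derive_ext.
  { intro t. symmetry. now apply ln_Rpower_Rabs_div_Rabs. }
  auto_derive.
  - repeat split; auto using ex_D4_ex_derive;
      rewrite Rmult_1_r; now apply Rsqr_pos_lt.
  - rewrite (Derive_D4 h3), (Derive_D4 h4) by assumption. field. auto.
Qed.

Lemma is_derive_quarter_ln_sq_div (g : R -> R) (x l k : R) :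
  is_derive g x l -> g x <> 0 -> k <> 0 ->
  is_derive (fun t => ln (g t ^ 2 / k ^ 2) / 4) x (l / (2 * g x)).
Proof.
  intros Hg Hx Hk.
  auto_derive.
  - split; [now exists l|]. split; [|exact I].
    apply Rdiv_lt_0_compat; rewrite Rmult_1_r; now apply Rsqr_pos_lt.
  - replace (Derive (fun t => g t) x) with l by (symmetry; now apply is_derive_unique).
    field. auto.
Qed.

Section Ansatz.

Variables (Lam0 : R) (Phi Xi vLam : F3).
Hypothesis Lam0_neq0 : Lam0 <> 0.
Hypothesis Phi_neq0 : forall a b c, Phi a b c <> 0.
Hypothesis D4_Phi_neq0 : forall a b c, D4 Phi a b c <> 0.
Hypothesis Xi_neq0 : forall a b c, Xi a b c <> 0.
Hypothesis D4_Xi_neq0 : forall a b c, D4 Xi a b c <> 0.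
Hypothesis ex_D4_Phi : forall a b c, ex_D4 Phi a b c.
Hypothesis ex_D4_D4_Phi : forall a b c, ex_D4 (D4 Phi) a b c.
Hypothesis ex_D1_Xi : forall a b c, ex_D1 Xi a b c.
Hypothesis ex_D2_Xi : forall a b c, ex_D2 Xi a b c.
Hypothesis ex_D4_Xi : forall a b c, ex_D4 Xi a b c.
Hypothesis D4_Xi_eq :
  forall a b c, D4 Xi a b c = vLam a b c * D4 (fun a b c => Phi a b c ^ 2) a b c.

Definition h3_ansatz : F3 := fun a b c => Phi a b c ^ 2 / (4 * Lam0).
Definition h4_ansatz : F3 := fun a b c => D4 Phi a b c ^ 2 / Xi a b c.
Definition n_density : F3 := fun a b c => D4 Phi a b c ^ 2 / (Phi a b c ^ 3 * Xi a b c).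

Ltac neq0 :=
  repeat first [ apply Rmult_integral_contrapositive_currified
               | apply Rinv_neq_0_compat | apply pow_nonzero ];
  auto; lra.

Lemma h3_ansatz_neq0 a b c : h3_ansatz a b c <> 0.
Proof. unfold h3_ansatz. neq0. Qed.

Lemma h4_ansatz_neq0 a b c : h4_ansatz a b c <> 0.
Proof. unfold h4_ansatz. neq0. Qed.

Lemma is_derive_h3_ansatz a b c :
  is_derive (fun t => h3_ansatz a b t) c (Phi a b c * D4 Phi a b c / (2 * Lam0)).
Proof.
  unfold h3_ansatz. auto_derive; auto using ex_D4_ex_derive.
  rewrite Derive_D4 by auto. field. exact Lam0_neq0.
Qed.

Lemma is_derive_h4_ansatz a b c :
  is_derive (fun t => h4_ansatz a b t) c
    (h4_ansatz a b c * (2 * D4 (D4 Phi) a b c / D4 Phi a b c - D4 Xi a b c / Xi a b c)).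
Proof.
  unfold h4_ansatz. auto_derive.
  - repeat split; auto using ex_D4_ex_derive.
  - rewrite !Derive_D4 by auto. field. auto.
Qed.

Lemma D4_h3_ansatz a b c : D4 h3_ansatz a b c = Phi a b c * D4 Phi a b c / (2 * Lam0).
Proof. apply D4_is_derive, is_derive_h3_ansatz. Qed.

Lemma D4_h3_ansatz_neq0 a b c : D4 h3_ansatz a b c <> 0.
Proof. rewrite D4_h3_ansatz. neq0. Qed.

Lemma phi_of_ansatz :
  phi_of h3_ansatz h4_ansatz = fun a b c => ln (Xi a b c ^ 2 / Lam0 ^ 2) / 4.
Proof.
  extensionality a. extensionality b. extensionality c.
  unfold phi_of. rewrite ln_Rabs_div_sqrt_Rabs.
  - rewrite D4_h3_ansatz. do 2 f_equal. unfold h3_ansatz, h4_ansatz. field. auto.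
  - apply D4_h3_ansatz_neq0.
  - apply Rmult_integral_contrapositive_currified; auto using h3_ansatz_neq0, h4_ansatz_neq0.
Qed.

Lemma is_derive1_phi_ansatz a b c :
  is_derive (fun t => phi_of h3_ansatz h4_ansatz t b c) a (D1 Xi a b c / (2 * Xi a b c)).
Proof.
  rewrite phi_of_ansatz.
  apply (is_derive_quarter_ln_sq_div (fun t => Xi t b c)); auto using is_derive_D1.
Qed.

Lemma is_derive2_phi_ansatz a b c :
  is_derive (fun t => phi_of h3_ansatz h4_ansatz a t c) b (D2 Xi a b c / (2 * Xi a b c)).
Proof.
  rewrite phi_of_ansatz.
  apply (is_derive_quarter_ln_sq_div (fun t => Xi a t c)); auto using is_derive_D2.
Qed.

Lemma is_derive4_phi_ansatz a b c :
  is_derive (fun t => phi_of h3_ansatz h4_ansatz a b t) c (D4 Xi a b c / (2 * Xi a b c)).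
Proof.
  rewrite phi_of_ansatz.
  apply (is_derive_quarter_ln_sq_div (fun t => Xi a b t)); auto using is_derive_D4.
Qed.

Lemma gamma_of_ansatz a b c :
  gamma_of h3_ansatz h4_ansatz a b c =
  3 * D4 Phi a b c / Phi a b c - 2 * D4 (D4 Phi) a b c / D4 Phi a b c
  + D4 Xi a b c / Xi a b c.
Proof.
  unfold gamma_of.
  rewrite (D4_is_derive _ _ _ _ _ (is_derive_gamma_log _ _ a b c
    (h3_ansatz_neq0 a b) (h4_ansatz_neq0 a b)
    (ex_D4_is_derive _ _ _ _ _ (is_derive_h3_ansatz a b c))
    (ex_D4_is_derive _ _ _ _ _ (is_derive_h4_ansatz a b c)))).
  rewrite D4_h3_ansatz, (D4_is_derive _ _ _ _ _ (is_derive_h4_ansatz a b c)).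
  unfold h3_ansatz. field. repeat split; auto using h4_ansatz_neq0.
Qed.

Lemma is_derive_n_density a b c :
  is_derive (fun t => n_density a b t) c
    (- gamma_of h3_ansatz h4_ansatz a b c * n_density a b c).
Proof.
  rewrite gamma_of_ansatz. unfold n_density. auto_derive.
  - repeat split; auto using ex_D4_ex_derive; neq0.
  - rewrite !Derive_D4 by auto. field. auto.
Qed.

Lemma D4_Phi_sq a b c :
  D4 (fun a b c => Phi a b c ^ 2) a b c = 2 * Phi a b c * D4 Phi a b c.
Proof.
  apply D4_is_derive. auto_derive; auto using ex_D4_ex_derive.
  rewrite Derive_D4 by auto. ring.
Qed.

Lemma vertical_eq_ansatz a b c :
  D4 (phi_of h3_ansatz h4_ansatz) a b c * D4 h3_ansatz a b c
  = 2 * h3_ansatz a b c * h4_ansatz a b c * vLam a b c.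
Proof.
  rewrite (D4_is_derive _ _ _ _ _ (is_derive4_phi_ansatz a b c)), D4_h3_ansatz,
    D4_Xi_eq, D4_Phi_sq.
  unfold h3_ansatz, h4_ansatz. field. auto.
Qed.

Variable I : F3.
Hypothesis I_primitive :
  forall a b c, derivable_pt_lim (fun t => I a b t) c (n_density a b c).

Definition n_ansatz (m k : R -> R -> R) : F3 := fun a b c => m a b + k a b * I a b c.

Lemma is_derive_n_ansatz m k a b c :
  is_derive (fun t => n_ansatz m k a b t) c (k a b * n_density a b c).
Proof.
  pose proof (proj2 (is_derive_Reals _ _ _) (I_primitive a b c)) as HI.
  unfold n_ansatz. auto_derive.
  - now exists (n_density a b c).
  - replace (Derive (fun t => I a b t) c) with (n_density a b c)
      by (symmetry; now apply is_derive_unique).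
    ring.
Qed.

Lemma D4_n_ansatz m k : D4 (n_ansatz m k) = fun a b c => k a b * n_density a b c.
Proof.
  extensionality a. extensionality b. extensionality c.
  apply D4_is_derive, is_derive_n_ansatz.
Qed.

Lemma is_derive_D4_n_ansatz m k a b c :
  is_derive (fun t => D4 (n_ansatz m k) a b t) c
    (- gamma_of h3_ansatz h4_ansatz a b c * D4 (n_ansatz m k) a b c).
Proof.
  rewrite D4_n_ansatz.
  replace (- gamma_of h3_ansatz h4_ansatz a b c * (k a b * n_density a b c))
    with (k a b * (- gamma_of h3_ansatz h4_ansatz a b c * n_density a b c)) by ring.
  apply is_derive_scal, is_derive_n_density.
Qed.

Lemma n_ansatz_equation m k a b c :
  D4 (D4 (n_ansatz m k)) a b c
  + gamma_of h3_ansatz h4_ansatz a b c * D4 (n_ansatz m k) a b c = 0.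
Proof. rewrite (D4_is_derive _ _ _ _ _ (is_derive_D4_n_ansatz m k a b c)). ring. Qed.

Lemma horizontal_eq1_ansatz a b c :
  beta_of h3_ansatz h4_ansatz a b c * (D1 Xi a b c / D4 Xi a b c)
  - alpha1_of h3_ansatz h4_ansatz a b c = 0.
Proof.
  unfold beta_of, alpha1_of.
  rewrite (D4_is_derive _ _ _ _ _ (is_derive4_phi_ansatz a b c)),
    (D1_is_derive _ _ _ _ _ (is_derive1_phi_ansatz a b c)).
  field. split; auto using h3_ansatz_neq0.
Qed.

Lemma horizontal_eq2_ansatz a b c :
  beta_of h3_ansatz h4_ansatz a b c * (D2 Xi a b c / D4 Xi a b c)
  - alpha2_of h3_ansatz h4_ansatz a b c = 0.
Proof.
  unfold beta_of, alpha2_of.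
  rewrite (D4_is_derive _ _ _ _ _ (is_derive4_phi_ansatz a b c)),
    (D2_is_derive _ _ _ _ _ (is_derive2_phi_ansatz a b c)).
  field. split; auto using h3_ansatz_neq0.
Qed.

Lemma decoupled_einstein_ansatz (eps1 eps2 : R) (Lam psi : F3) (m1 k1 m2 k2 : R -> R -> R) :
  (forall a b c, ex_D1 psi a b c /\ ex_D1 (D1 psi) a b c /\
                 ex_D2 psi a b c /\ ex_D2 (D2 psi) a b c) ->
  (forall a b c, eps1 * D1 (D1 psi) a b c + eps2 * D2 (D2 psi) a b c = 2 * Lam a b c) ->
  decoupled_einstein eps1 eps2 Lam vLam psi h3_ansatz h4_ansatz
    (n_ansatz m1 k1) (n_ansatz m2 k2)
    (fun a b c => D1 Xi a b c / D4 Xi a b c) (fun a b c => D2 Xi a b c / D4 Xi a b c).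
Proof.
  intros Hpsi Hpsi_eq a b c.
  destruct (Hpsi a b c) as (E1 & E11 & E2 & E22).
  repeat split; auto using h3_ansatz_neq0, h4_ansatz_neq0, D4_h3_ansatz_neq0,
    vertical_eq_ansatz, n_ansatz_equation, horizontal_eq1_ansatz, horizontal_eq2_ansatz.
  all: eauto using ex_D1_is_derive, ex_D2_is_derive, ex_D4_is_derive,
    is_derive_h3_ansatz, is_derive1_phi_ansatz, is_derive2_phi_ansatz, is_derive4_phi_ansatz,
    is_derive_n_ansatz, is_derive_D4_n_ansatz, is_derive_gamma_log,
    is_derive_h4_ansatz, h3_ansatz_neq0, h4_ansatz_neq0.
Qed.

End Ansatz.

Theorem theorem3p2
  (eps1 eps2 eps3 eps4 : R)
  (He1 : eps1 = 1 \/ eps1 = -1) (He2 : eps2 = 1 \/ eps2 = -1)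
  (He3 : eps3 = 1 \/ eps3 = -1) (He4 : eps4 = 1 \/ eps4 = -1)
  (Lam : R -> R -> R) (vLam : F3) (Lam0 : R)
  (Phi Xi : F3) (psi : R -> R -> R)
  (n1_1 n1_2 n2_1 n2_2 : R -> R -> R) (I : F3)
  (HLam : smooth (lift2 Lam)) (HvLam : smooth vLam) (HLam0 : Lam0 <> 0)
  (HPhi : smooth Phi) (HPhipos : forall a b c, 0 < Phi a b c)
  (HPhi4 : forall a b c, D4 Phi a b c <> 0)
  (HXi : smooth Xi)
  (HXieq : forall a b c,
     D4 Xi a b c = vLam a b c * D4 (fun a b c => Phi a b c ^ 2) a b c)
  (HXi0 : forall a b c, Xi a b c <> 0)
  (HXi4 : forall a b c, D4 Xi a b c <> 0)
  (Hpsi : smooth (lift2 psi))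
  (Hpsieq : forall a b c,
     eps1 * D1 (D1 (lift2 psi)) a b c + eps2 * D2 (D2 (lift2 psi)) a b c
     = 2 * Lam a b)
  (Hn : smooth (lift2 n1_1) /\ smooth (lift2 n1_2) /\
        smooth (lift2 n2_1) /\ smooth (lift2 n2_2))
  (HI : forall a b c, derivable_pt_lim (fun t => I a b t) c
          (D4 Phi a b c ^ 2 / (Phi a b c ^ 3 * Xi a b c))) :
  let h3 : F3 := fun a b c => Phi a b c ^ 2 / (4 * Lam0) in
  let h4 : F3 := fun a b c => D4 Phi a b c ^ 2 / Xi a b c in
  let n1 : F3 := fun a b c => n1_1 a b + n2_1 a b * I a b c in
  let n2 : F3 := fun a b c => n1_2 a b + n2_2 a b * I a b c in
  let w1 : F3 := fun a b c => D1 Xi a b c / D4 Xi a b c in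
  let w2 : F3 := fun a b c => D2 Xi a b c / D4 Xi a b c in
  decoupled_einstein eps1 eps2 (lift2 Lam) vLam (lift2 psi) h3 h4 n1 n2 w1 w2.
Proof.
  intros h3 h4 n1 n2 w1 w2.
  pose proof (smooth_ex_D _ HPhi) as ex_Phi.
  pose proof (smooth_ex_D _ (smooth_D4 _ HPhi)) as ex_D4_Phi.
  pose proof (smooth_ex_D _ HXi) as ex_Xi.
  pose proof (smooth_ex_D _ Hpsi) as ex_psi.
  pose proof (smooth_ex_D _ (smooth_D1 _ Hpsi)) as ex_D1_psi.
  pose proof (smooth_ex_D _ (smooth_D2 _ Hpsi)) as ex_D2_psi.
  (* Smoothness of Lam, vLam and of the coefficients of n_k is not needed: the system
     only involves y^4-derivatives of n_k, and Lam, vLam enter as data. *)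
  apply (decoupled_einstein_ansatz Lam0 Phi Xi vLam); auto; intros a b c.
  - apply Rgt_not_eq, HPhipos.
  - apply ex_Phi.
  - apply ex_D4_Phi.
  - apply ex_Xi.
  - apply ex_Xi.
  - apply ex_Xi.
  - repeat split; first [apply ex_psi | apply ex_D1_psi | apply ex_D2_psi].
Qed.
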